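(* Let $\mathbb{F}$ be a field and let $n>4$ be an integer. If $\mathcal{A}$ is a unital $\mathbb{F}$-algebra with $\dim\mathcal{A}=n$ and $l(\mathcal{A})>2^{n-3}$, then $l(\mathcal{A})=2^{n-3}+2^{p}$ for some $p\in\{0,\ldots,n-3\}$.
   Context: All algebras are finite-dimensional, unital, not necessarily associative algebras over the field $\mathbb{F}$. For a finite generating set $S$ of an algebra $\mathcal{A}$, a word in $S$ is any product (with any bracketing) of finitely many elements of $S$; its length is the number of factors, and $1$ is a word of length $0$. $L_i(S)$ is the linear span of all words in $S$ of length at most $i$. The length of $S$ is $l(S)=\min\{k\ge0: L_k(S)=\mathcal{A}\}$, and $l(\mathcal{A})=\max\{l(S): S\text{ a finite generating set of }\mathcal{A}\}$. *)

From HB Require Import structures.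
From mathcomp Require Import all_boot all_order all_algebra.
Set Implicit Arguments. Unset Strict Implicit. Unset Printing Implicit Defensive.
Import GRing.Theory.
Local Open Scope ring_scope.

(* A unital, not necessarily associative, algebra of dimension n over the
   field F, realised on the coordinate space 'rV[F]_n (any n-dimensional
   F-algebra is isomorphic to one of these). *)
Record unital_algebra (F : fieldType) (n : nat) := UnitalAlgebra {
  amul : 'rV[F]_n -> 'rV[F]_n -> 'rV[F]_n;
  aone : 'rV[F]_n;
  amulDl : forall (a : F) (x y z : 'rV[F]_n),
      amul (a *: x + y) z = a *: amul x z + amul y z;
  amulDr : forall (a : F) (x y z : 'rV[F]_n),
      amul x (a *: y + z) = a *: amul x y + amul x z;
  amul1l : forall x, amul aone x = x;
  amul1r : forall x, amul x aone = x
}.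

Inductive word : Type :=
| WGen of nat
| WMul of word & word.

Fixpoint wlen (w : word) : nat :=
  match w with WGen _ => 1%N | WMul u v => (wlen u + wlen v)%N end.

Fixpoint wvalid (m : nat) (w : word) : bool :=
  match w with WGen i => (i < m)%N | WMul u v => wvalid m u && wvalid m v end.

Fixpoint weval (F : fieldType) (n : nat) (A : unital_algebra F n)
    (S : seq 'rV[F]_n) (w : word) : 'rV[F]_n :=
  match w with
  | WGen i => nth 0 S i
  | WMul u v => amul A (weval A S u) (weval A S v)
  end.

Definition is_word_le (F : fieldType) (n : nat) (A : unital_algebra F n)
    (S : seq 'rV[F]_n) (k : nat) (x : 'rV[F]_n) : Prop :=
  x = aone A \/
  exists w : word, [/\ wvalid (size S) w, (wlen w <= k)%N & x = weval A S w].

Definition in_L (F : fieldType) (n : nat) (A : unital_algebra F n)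
    (S : seq 'rV[F]_n) (k : nat) (x : 'rV[F]_n) : Prop :=
  exists ws : seq 'rV[F]_n,
    (forall y, y \in ws -> is_word_le A S k y) /\ x \in <<ws>>%VS.

Definition L_full (F : fieldType) (n : nat) (A : unital_algebra F n)
    (S : seq 'rV[F]_n) (k : nat) : Prop :=
  forall x : 'rV[F]_n, in_L A S k x.

Definition generates (F : fieldType) (n : nat) (A : unital_algebra F n)
    (S : seq 'rV[F]_n) : Prop :=
  exists k, L_full A S k.

Definition set_length (F : fieldType) (n : nat) (A : unital_algebra F n)
    (S : seq 'rV[F]_n) (k : nat) : Prop :=
  L_full A S k /\ forall j, (j < k)%N -> ~ L_full A S j.

Definition alg_length (F : fieldType) (n : nat) (A : unital_algebra F n)
    (m : nat) : Prop :=
  (exists S, generates A S /\ set_length A S m) /\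
  (forall S k, generates A S -> set_length A S k -> (k <= m)%N).

(* Let L_k be the span of the words of length at most k and call k a jump
   when L_(k-1) is a proper subspace of L_k.  Since L_a L_b <= L_(a+b), a word
   of length k >= 2 whose factor lengths are not both jumps already lies in
   L_(k-1); hence every jump k >= 2 is a sum of two smaller jumps.  A purely
   arithmetic induction then shows that the c-th jump is at most 2^(c-1), and
   that when it exceeds 2^(c-2) it equals 2^(c-2) + 2^p.  As 1 spans a
   nonzero L_0, there are at most n - 1 jumps, and l(S) > 2^(n-3) is a jump
   which forces c = n - 1. *)

From HB Require Import structures.
From mathcomp Require Import all_boot all_order all_algebra zify.
Set Implicit Arguments. Unset Strict Implicit.
Import GRing.Theory.

Lemma exp2_pred c : 0 < c -> 2 ^ c = 2 * 2 ^ c.-1.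
Proof. by move=> c_gt0; rewrite -expnS prednK. Qed.

Lemma exp2_ltn i j : i < j -> 2 * 2 ^ i <= 2 ^ j.
Proof. by move=> ij; rewrite -expnS leq_pexp2l. Qed.

Lemma exp2_add4 f s q : s <= f -> q <= f ->
  2 ^ f.+2 < 2 ^ f + 2 ^ s + (2 ^ f.+1 + 2 ^ q) ->
  exists2 p, p <= f & 2 ^ f + 2 ^ s + (2 ^ f.+1 + 2 ^ q) = 2 ^ f.+2 + 2 ^ p.
Proof.
rewrite !expnS leq_eqVlt => /predU1P [->|s_lt] q_le sum_gt.
  by exists q => //; lia.
move: q_le; rewrite leq_eqVlt => /predU1P [q_eq|q_lt].
  by exists s; [exact: ltnW | rewrite q_eq; lia].
have := exp2_ltn s_lt; have := exp2_ltn q_lt; lia.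
Qed.

Section JumpCombinatorics.
Variable J : pred nat.
Hypothesis J0 : ~~ J 0.
Hypothesis J_split : forall k, 1 < k -> J k ->
  exists a b, [/\ 0 < a, 0 < b, J a, J b & a + b = k].

Definition njumps k := count J (iota 0 k.+1).

Lemma njumpsS k : njumps k.+1 = njumps k + J k.+1.
Proof. by rewrite /njumps -addn1 iotaD count_cat /= addn0. Qed.

Lemma leq_njumps i j : i <= j -> njumps i <= njumps j.
Proof.
move=> /subnKC <-; elim: (j - i) => [|d IH]; first by rewrite addn0.
by rewrite addnS njumpsS (leq_trans IH) ?leq_addr.
Qed.

Lemma ltn_njumps i k : i < k -> J k -> njumps i < njumps k.
Proof.
by case: k => // k ik Jk; rewrite njumpsS Jk addn1 ltnS leq_njumps.
Qed.

Lemma jump_gt0 k : J k -> 0 < k.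
Proof. by case: k => //; rewrite (negbTE J0). Qed.

Lemma njumps_gt0 k : J k -> 0 < njumps k.
Proof. by move=> Jk; apply: leq_ltn_trans (ltn_njumps (jump_gt0 Jk) Jk). Qed.

Lemma jump_le1 k : J k -> k <= 1 -> k = 1.
Proof. by move=> /jump_gt0; lia. Qed.

Lemma njumps1 : J 1 -> njumps 1 = 1.
Proof. by rewrite /njumps /= (negbTE J0) => ->. Qed.

Lemma jump_decomp k : 1 < k -> J k ->
  exists a b, [/\ 0 < a <= b, a + b = k, J a, J b &
                  njumps a <= njumps b < njumps k].
Proof.
move=> k_gt1 Jk; have [a [b [a_gt0 b_gt0 Ja Jb abk]]] := J_split k_gt1 Jk.
wlog ab : a b a_gt0 b_gt0 Ja Jb abk / a <= b.
  move=> H; have [|/ltnW] := leqP a b; first exact: H.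
  by apply: H => //; rewrite addnC.
exists a, b; rewrite a_gt0 ab leq_njumps // ltn_njumps //; lia.
Qed.

Lemma jump_le_exp k : J k -> k <= 2 ^ (njumps k).-1.
Proof.
elim/ltn_ind: k => k IH Jk.
have [/(jump_le1 Jk) k1|k_gt1] := leqP k 1.
  by move: Jk; rewrite k1 => /njumps1 ->.
have [a [b [/andP [a_gt0 ab] abk Ja Jb /andP [ca_cb cb_ck]]]] :=
  jump_decomp k_gt1 Jk.
have a_le := IH a ltac:(lia) Ja; have b_le := IH b ltac:(lia) Jb.
have : 2 ^ (njumps a).-1 <= 2 ^ (njumps b).-1 by apply: leq_pexp2l => //; lia.
have : 2 ^ njumps b <= 2 ^ (njumps k).-1 by apply: leq_pexp2l => //; lia.
have := exp2_pred (njumps_gt0 Jb); lia.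
Qed.

Lemma jump_exp_below k : J k -> k = 2 ^ (njumps k).-1 ->
  forall i, J i -> i <= k -> i = 2 ^ (njumps i).-1.
Proof.
elim/ltn_ind: k => k IH Jk k_eq i Ji ik.
have [k_le1|k_gt1] := leqP k 1.
  by have -> : i = k by have := jump_gt0 Ji; lia.
have [a [b [/andP [a_gt0 ab] abk Ja Jb /andP [ca_cb cb_ck]]]] :=
  jump_decomp k_gt1 Jk.
have b_le := jump_le_exp Jb; have a_le := jump_le_exp Ja.
have a_exp : 2 ^ (njumps a).-1 <= 2 ^ (njumps b).-1.
  by apply: leq_pexp2l => //; lia.
have b_exp := exp2_pred (njumps_gt0 Jb).
have exp_gt0 := expn_gt0 2 (njumps b).-1.
have cb_eq : njumps b = (njumps k).-1.
  have [cb_lt|] := ltnP (njumps b) (njumps k).-1; last by lia.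
  have := exp2_ltn cb_lt; lia.
rewrite -cb_eq in k_eq.
have b_eq : b = 2 ^ (njumps b).-1 by lia.
have [ib|bi] := leqP i b; first by apply: (IH b) => //; lia.
move: ik; rewrite leq_eqVlt => /predU1P [->|ik]; first by rewrite -cb_eq.
have := ltn_njumps bi Ji; have := ltn_njumps ik Jk; lia.
Qed.

Lemma jump_exp_add d k : J k -> njumps k = d.+2 -> 2 ^ d < k ->
  exists2 p, p <= d & k = 2 ^ d + 2 ^ p.
Proof.
elim/ltn_ind: k d => k IH d Jk ck k_gt.
have k_gt1 : 1 < k.
  case: (leqP k 1) => // /(jump_le1 Jk) k1.
  by move: ck Jk; rewrite k1 => ck /njumps1; rewrite ck.
have [a [b [/andP [a_gt0 ab] abk Ja Jb /andP [ca_cb cb_ck]]]] :=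
  jump_decomp k_gt1 Jk.
have b_le := jump_le_exp Jb; have a_le := jump_le_exp Ja.
have a_exp : 2 ^ (njumps a).-1 <= 2 ^ (njumps b).-1.
  by apply: leq_pexp2l => //; lia.
have cb_eq : njumps b = d.+1.
  have [cb_le|] := ltnP (njumps b) d.+1; last by lia.
  have : 2 ^ njumps b <= 2 ^ d by apply: leq_pexp2l.
  have := exp2_pred (njumps_gt0 Jb); lia.
rewrite cb_eq /= in b_le a_exp.
case: d => [|e] in ck k_gt cb_eq b_le a_exp *.
  by exists 0 => //; lia.
have [q q_le b_eq] : exists2 q, q <= e & b = 2 ^ e + 2 ^ q.
  by apply: (IH b) => //; rewrite expnS in k_gt; lia.
move: q_le; rewrite leq_eqVlt => /predU1P [q_e|q_lt].
  rewrite {}q_e in b_eq.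
  have b_pow : b = 2 ^ (njumps b).-1 by rewrite cb_eq expnS; lia.
  have a_pow := jump_exp_below Jb b_pow Ja ab.
  by exists (njumps a).-1; [lia | rewrite expnS; lia].
move: ab; rewrite leq_eqVlt => /predU1P [a_b|a_lt_b].
  by exists q.+1; [lia | rewrite !expnS; lia].
(* Left: a < b = 2^(d-1) + 2^q with q < d - 1, and k > 2^d forces a to be
   a d-th jump above 2^(d-2). *)
case: e q_lt => [//|f] q_lt in ck k_gt cb_eq b_le a_exp b_eq *.
have : 2 ^ q <= 2 ^ f by apply: leq_pexp2l.
rewrite !expnS in k_gt b_eq b_le * => q_exp.
have ca_eq : njumps a = f.+2.
  have [ca_le|] := ltnP (njumps a) f.+2.
    have : 2 ^ (njumps a).-1 <= 2 ^ f by apply: leq_pexp2l => //; lia.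
    lia.
  by have := ltn_njumps a_lt_b Jb; lia.
have [s s_le a_eq] : exists2 s, s <= f & a = 2 ^ f + 2 ^ s.
  by apply: (IH a) => //; lia.
have [p p_le sum_eq] := exp2_add4 s_le q_lt ltac:(rewrite !expnS; lia).
by exists p; [lia | rewrite !expnS in sum_eq; lia].
Qed.

Lemma jump_gt_exp d k : J k -> njumps k <= d.+2 -> 2 ^ d < k ->
  exists2 p, p <= d & k = 2 ^ d + 2 ^ p.
Proof.
move=> Jk ck k_gt; apply: jump_exp_add => //.
have : 2 ^ d < 2 ^ (njumps k).-1 by apply: leq_trans (jump_le_exp Jk).
by rewrite ltn_exp2l //; lia.
Qed.

End JumpCombinatorics.

Section SubspaceChain.
Variables (K : fieldType) (vT : vectType K) (V : nat -> {vspace vT}).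

Definition chain_jump : pred nat := fun k => V k != V k.-1.

Lemma chain_jump0 : ~~ chain_jump 0.
Proof. by rewrite negbK. Qed.

Lemma exists_last_jump a :
  exists2 b, b <= a & V b = V a /\ (b == 0) || chain_jump b.
Proof.
elim: a => [|a [b b_le [Vb b_jump]]]; first by exists 0.
have [Va|jump] := eqVneq (V a.+1) (V a); last by exists a.+1.
by exists b; [exact: leqW | rewrite Va].
Qed.

Hypothesis V_mono : forall k, (V k <= V k.+1)%VS.

Lemma dim_chain_njumps k : \dim (V 0) + njumps chain_jump k <= \dim (V k).
Proof.
elim: k => [|k IH]; first by rewrite /njumps /= (negbTE chain_jump0) !addn0.
rewrite njumpsS [chain_jump _]/chain_jump /=.
have [Vk|] := eqVneq (V k.+1) (V k).
  by rewrite addn0 Vk.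
rewrite eq_sym eqEdim V_mono /= -ltnNge; lia.
Qed.

End SubspaceChain.

Lemma amul_is_bilinear (F : fieldType) (n : nat) (A : unital_algebra F n) :
  bilinear_for (GRing.Scale.Law.clone _ _ *:%R _)
    (GRing.Scale.Law.clone _ _ *:%R _) (amul A).
Proof. by split=> [z|x] a y w; [apply: amulDl | apply: amulDr]. Qed.

HB.instance Definition _ (F : fieldType) (n : nat) (A : unital_algebra F n) :=
  bilinear_isBilinear.Build F _ _ _ _ _ (amul A) (amul_is_bilinear A).

Section WordSpans.
Variables (F : fieldType) (n : nat) (A : unital_algebra F n).
Local Open Scope ring_scope.

Lemma aone_neq0 : (0 < n)%N -> aone A != 0.
Proof.
move=> n_gt0; apply/eqP => A1_0.
have := amul1l A (const_mx 1); rewrite A1_0 linear0l.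
move/matrixP/(_ 0 (Ordinal n_gt0)); rewrite !mxE => /eqP.
by rewrite eq_sym oner_eq0.
Qed.

Lemma amul_span (X Y : seq 'rV[F]_n) (U : {vspace 'rV[F]_n}) x y :
  {in X & Y, forall g h, amul A g h \in U} ->
  x \in <<X>>%VS -> y \in <<Y>>%VS -> amul A x y \in U.
Proof.
move=> XY_U /(@coord_span _ _ _ (in_tuple X)) ->.
move=> /(@coord_span _ _ _ (in_tuple Y)) ->.
rewrite linear_sumlz; apply: memv_suml => i _; rewrite linearZl_LR memvZ //.
rewrite linear_sumr; apply: memv_suml => j _; rewrite linearZr_LR memvZ //.
by apply: XY_U; apply: mem_nth.
Qed.

Variable S : seq 'rV[F]_n.

Fixpoint word_values k : seq (nat * 'rV[F]_n) :=
  if k is k'.+1 then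
    [seq (1%N, s) | s <- S] ++
    [seq lx <- [seq ((p.1 + q.1)%N, amul A p.2 q.2)
                 | p <- word_values k', q <- word_values k'] | (lx.1 <= k)%N]
  else [::].

Lemma wlen_gt0 w : (0 < wlen w)%N.
Proof. by elim: w => //= u IHu v _; rewrite addn_gt0 IHu. Qed.

Lemma word_valuesP k l x : (l, x) \in word_values k <->
  exists w, [/\ wvalid (size S) w, wlen w = l, (l <= k)%N & x = weval A S w].
Proof.
split.
  elim: k l x => // k IH l x /=; rewrite mem_cat => /orP [].
    case/mapP => s sS [-> ->]; exists (WGen (index s S)).
    by rewrite /= index_mem nth_index.
  rewrite mem_filter /= => /andP [lk /allpairsP [[[l1 x1] [l2 x2]] /=]].
  case=> p1 p2 [el ex]; subst l x.
  have [u [vu ul _ ->]] := IH _ _ p1; have [v [vv vl _ ->]] := IH _ _ p2.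
  by exists (WMul u v); rewrite /= vu vv ul vl.
case=> w [+ <- + ->]; elim: w k => [i|u IHu v IHv] [|k] //=.
- by move=> iS _; rewrite mem_cat map_f ?mem_nth.
- by move=> _; rewrite leqn0 addn_eq0 eqn0Ngt wlen_gt0.
move=> /andP [vu vv] uvk; rewrite mem_cat mem_filter /= uvk; apply/orP; right.
have := wlen_gt0 u; have := wlen_gt0 v => v_gt0 u_gt0.
apply/allpairsP; exists ((wlen u, weval A S u), (wlen v, weval A S v)).
by rewrite IHu ?IHv //; lia.
Qed.

Definition Lspan_gens k := aone A :: unzip2 (word_values k).
Definition Lspan k : {vspace 'rV[F]_n} := <<Lspan_gens k>>%VS.

Lemma Lspan_gensP k g : g \in Lspan_gens k <-> is_word_le A S k g.
Proof.
rewrite inE; split.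
  case/orP => [/eqP ->|/mapP [[l x] /word_valuesP [w [vw <- lk ->]] ->]].
    by left.
  by right; exists w.
case=> [->|[w [vw wk ->]]]; first by rewrite eqxx.
apply/orP; right; apply/mapP; exists (wlen w, weval A S w) => //.
by apply/word_valuesP; exists w.
Qed.

Lemma Lspan_word k g : is_word_le A S k g -> g \in Lspan k.
Proof. by move/Lspan_gensP/memv_span. Qed.

Lemma in_LP k x : in_L A S k x <-> x \in Lspan k.
Proof.
split=> [[ws [ws_words]]|x_L]; last first.
  by exists (Lspan_gens k); split=> // y /Lspan_gensP.
by apply: subvP; apply/span_subvP => y /ws_words /Lspan_word.
Qed.

Lemma is_word_le_mono i j g :
  (i <= j)%N -> is_word_le A S i g -> is_word_le A S j g.
Proof.
move=> ij [->|[w [vw wi ->]]]; first by left.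
by right; exists w; split=> //; apply: leq_trans ij.
Qed.

Lemma Lspan_mono : {homo Lspan : i j / (i <= j)%N >-> (i <= j)%VS}.
Proof.
move=> i j ij; apply/span_subvP => g.
by move/Lspan_gensP/(is_word_le_mono ij)/Lspan_word.
Qed.

Lemma Lspan_mul i j x y :
  x \in Lspan i -> y \in Lspan j -> amul A x y \in Lspan (i + j).
Proof.
apply: amul_span => g h /Lspan_gensP [->|[u [vu ui ->]]].
  by rewrite amul1l => /Lspan_gensP/(is_word_le_mono (leq_addl i j))/Lspan_word.
move=> /Lspan_gensP [->|[v [vv vj ->]]].
  rewrite amul1r; apply/Lspan_word/(is_word_le_mono (leq_addr j i)).
  by right; exists u.
apply: Lspan_word; right; exists (WMul u v).
by split=> //=; [exact/andP | exact: leq_add].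
Qed.

Local Notation Lspan_jump := (chain_jump Lspan).

Lemma Lspan_jump_split k : (1 < k)%N -> Lspan_jump k ->
  exists a b,
    [/\ (0 < a)%N, (0 < b)%N, Lspan_jump a, Lspan_jump b & (a + b)%N = k].
Proof.
move=> k_gt1 Jk.
have [/existsP [a /and3P [a_gt0 Ja Jka]]|no_split] :=
  boolP [exists a : 'I_k, [&& 0 < a, Lspan_jump a & Lspan_jump (k - a)]%N].
  exists a, (k - a)%N; split=> //; first by rewrite subn_gt0.
  by rewrite subnKC // ltnW.
case/negP: Jk; rewrite eqEsubv andbC Lspan_mono ?leq_pred //=.
apply/span_subvP => g /Lspan_gensP [->|[w [vw wk ->]]].
  by apply: Lspan_word; left.
have [w_lt|w_ge] := ltnP (wlen w) k.
  by apply: Lspan_word; right; exists w; split=> //; lia.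
case: w vw wk w_ge => [i|u v] /=; first by lia.
move=> /andP [vu vv] uv_le uv_ge.
(* Shrinking both factor lengths to the last jumps below them lands the
   product in Lspan k.-1, unless both lengths already are jumps. *)
have [u' u'_le [Lu' u'_jump]] := exists_last_jump Lspan (wlen u).
have [v' v'_le [Lv' v'_jump]] := exists_last_jump Lspan (wlen v).
have : amul A (weval A S u) (weval A S v) \in Lspan (u' + v').
  apply: Lspan_mul; [rewrite Lu' | rewrite Lv']; apply: Lspan_word; right.
    by exists u.
  by exists v.
apply/subvP/Lspan_mono; have [|uv_ge'] := ltnP (u' + v') k; first by lia.
have u_gt0 := wlen_gt0 u; have v_gt0 := wlen_gt0 v.
have eu : u' = wlen u by lia.
have ev : v' = wlen v by lia.
have Ju : Lspan_jump (wlen u) by move: u'_jump; rewrite eu eqn0Ngt u_gt0.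
have Jv : Lspan_jump (wlen v) by move: v'_jump; rewrite ev eqn0Ngt v_gt0.
have u_lt : (wlen u < k)%N by lia.
case/negP: no_split; apply/existsP; exists (Ordinal u_lt).
have k_eq : (wlen u + wlen v)%N = k by lia.
by rewrite /= u_gt0 Ju -k_eq addKn.
Qed.

End WordSpans.

Theorem corollary4p7 (F : fieldType) (n : nat) (A : unital_algebra F n)
    (m : nat) :
  (4 < n)%N -> alg_length A m -> (2 ^ (n - 3) < m)%N ->
  exists p : nat, (p <= n - 3)%N /\ m = (2 ^ (n - 3) + 2 ^ p)%N.
Proof.
move=> n_gt4 [[S [_ [L_m L_lt]]] _] m_gt.
have Jm : chain_jump (Lspan A S) m.
  apply: (contra_notN _ (L_lt m.-1 _)) => [/eqP L_eq x|]; last first.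
    by have := expn_gt0 2 (n - 3); lia.
  by apply/in_LP; rewrite -L_eq; apply/in_LP.
have L0_gt0 : (0 < \dim (Lspan A S 0))%N.
  have one_L0 : aone A \in Lspan A S 0 by apply: Lspan_word; left.
  rewrite lt0n dimv_eq0; apply: contraTneq one_L0 => ->.
  by rewrite memv0 aone_neq0 //; lia.
have Lm_le : (\dim (Lspan A S m) <= n)%N.
  by have := dimvS (subvf (Lspan A S m)); rewrite dimvf dim_matrix mul1r.
have jumps_le : (njumps (chain_jump (Lspan A S)) m <= (n - 3).+2)%N.
  by have := dim_chain_njumps (fun k => Lspan_mono A S (leqnSn k)) m; lia.
have [p p_le ->] :=
  jump_gt_exp (chain_jump0 _) (@Lspan_jump_split _ _ A S) Jm jumps_le m_gt.
by exists p.
Qed.
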